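(* Let $q$ be a prime power, $3\le n\le q$, and let $\boldsymbol\alpha=(\alpha_1,\dots,\alpha_n)$ consist of pairwise distinct elements of $\mathbb F_q$. The Reed–Solomon code $\mathrm{RS}_{\boldsymbol\alpha}(n,2)$ has insdel distance $2n-4$ if and only if the following holds: for every $\mathbf i=(i_1,i_2,i_3),\mathbf j=(j_1,j_2,j_3)\in S_3(n)$ with $d_H(\mathbf i,\mathbf j)\ge 2$, there is no pair $(a,b)\in\mathbb F_q^*\times\mathbb F_q$ with $a\alpha_{i_\ell}+b=\alpha_{j_\ell}$ for all $\ell=1,2,3$.
   Context: $\mathrm{RS}_{\boldsymbol\alpha}(n,k)=\{(f(\alpha_1),\dots,f(\alpha_n)): f\in\mathbb F_q[x],\ \deg f<k\}$. $S_3(n)=\{(i_1,i_2,i_3)\in\{1,\dots,n\}^3: i_1<i_2<i_3\}$, and $d_H(\mathbf i,\mathbf j)$ is the number of coordinates in which $\mathbf i$ and $\mathbf j$ differ. For $\mathbf u,\mathbf v\in\mathbb F_q^n$, the insdel distance $d_I(\mathbf u,\mathbf v)$ is the minimum number of insertions and deletions transforming $\mathbf u$ into $\mathbf v$; equivalently $2n-2\ell_{\rm LCS}(\mathbf u,\mathbf v)$ with $\ell_{\rm LCS}$ the length of a longest common subsequence. The insdel distance of a code is the minimum over distinct codewords. *)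

From mathcomp Require Import all_boot all_order all_algebra.
Set Implicit Arguments. Unset Strict Implicit. Unset Printing Implicit Defensive.
Import GRing.Theory.
Local Open Scope ring_scope.

(* Length of a longest common subsequence of u and v: every subsequence of u
   is  mask m u  for some bit mask m of length size u. *)
Definition lcs_len (T : eqType) (u v : seq T) : nat :=
  (\max_(m : (size u).-tuple bool | subseq (mask m u) v) size (mask m u))%N.

Definition insdel_dist (T : eqType) (u v : seq T) : nat :=
  (size u + size v - 2 * lcs_len u v)%N.

Definition code_insdel_dist (T : eqType) (C : seq T -> Prop) (d : nat) : Prop :=
  (exists u v, [/\ C u, C v, u <> v & insdel_dist u v = d]) /\
  (forall u v, C u -> C v -> u <> v -> (d <= insdel_dist u v)%N).

Definition RS (F : fieldType) (n : nat) (alpha : 'I_n -> F) (k : nat)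
  (c : seq F) : Prop :=
  exists p : {poly F}, (size p <= k)%N /\ c = [seq p.[alpha i] | i <- enum 'I_n].

Definition incr3 (n : nat) (i : 'I_3 -> 'I_n) : bool :=
  ((i (@Ordinal 3 0 isT) < i (@Ordinal 3 1 isT)) &&
   (i (@Ordinal 3 1 isT) < i (@Ordinal 3 2 isT)))%N.

Definition dH3 (n : nat) (i j : 'I_3 -> 'I_n) : nat := #|[set l : 'I_3 | i l != j l]|.

From mathcomp Require Import all_boot all_order all_algebra.
From mathcomp Require Import ring zify.
Import Order.TTheory GRing.Theory.
Set Implicit Arguments. Unset Strict Implicit.
Local Open Scope ring_scope.

(* A common subsequence of length 3 of the words of f and g reads
   f(alpha_i) = g(alpha_j) along two increasing index triples i, j; solving for
   alpha_j gives an affine relation alpha_j = a alpha_i + b with a <> 0, and as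
   f <> g this map is not the identity, so it fixes at most one point and i, j differ
   in at least two places.  Conversely such a relation makes the words of aX + b and
   of X share three symbols.  The distance 2n - 4 is attained by the words of X and
   of the affine map sending alpha_1, alpha_2 to alpha_2, alpha_3. *)

Section LongestCommonSubsequence.
Variable T : eqType.

Lemma lcs_len_ge (s u v : seq T) :
  subseq s u -> subseq s v -> (size s <= lcs_len u v)%N.
Proof.
case/subseqP => m size_m -> sv; rewrite /lcs_len.
have size_m' : size m == size u by rewrite size_m.
exact: (@leq_bigmax_cond _ _ (fun t : (size u).-tuple bool => size (mask t u))
          (Tuple size_m')).
Qed.

Lemma lcs_len_le (u v : seq T) k :
  (forall s, subseq s u -> subseq s v -> (size s <= k)%N) -> (lcs_len u v <= k)%N.
Proof.
by move=> le_k; apply/bigmax_leqP => t sv; apply: le_k => //; apply: mask_subseq.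
Qed.

End LongestCommonSubsequence.

Lemma subseq_map_preimage (T1 T2 : eqType) (h : T1 -> T2) (s : seq T2) (t : seq T1) :
  subseq s (map h t) -> exists2 r, subseq r t & s = map h r.
Proof. by case/subseqP => m _ ->; exists (mask m t); rewrite ?mask_subseq ?map_mask. Qed.

Lemma subseq_enum_ord n (r : seq 'I_n) : subseq r (enum 'I_n) = sorted <%O r.
Proof.
have lt_enum : sorted <%O (enum 'I_n).
  by rewrite ltEord; have := iota_ltn_sorted 0 n; rewrite -val_enum_ord sorted_map.
apply/idP/idP => [/subseq_lt_sorted -> // | lt_r].
apply/subseq_uniqP; first exact: enum_uniq.
apply: lt_sorted_eq => //; first exact: lt_sorted_filter.
by move=> k; rewrite mem_filter mem_enum andbT.
Qed.

Lemma enum_ord3 : enum 'I_3 = [:: @Ordinal 3 0 isT; @Ordinal 3 1 isT; @Ordinal 3 2 isT].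
Proof. by apply: (inj_map val_inj); rewrite val_enum_ord. Qed.

Section IncreasingTriples.
Variable n : nat.
Implicit Types i j : 'I_3 -> 'I_n.

Lemma incr3E i : incr3 i = sorted <%O (codom i).
Proof. by rewrite codomE enum_ord3 /= andbT. Qed.

Lemma incr3_inj i : incr3 i -> injective i.
Proof.
rewrite incr3E => /lt_sorted_uniq uniq_i.
by apply/injectiveP; rewrite /injectiveb /dinjectiveb -codomE.
Qed.

Lemma codom_seq3 (r : seq 'I_n) : size r = 3%N -> exists i, codom i = r.
Proof.
case: r => [|r0 [|r1 [|r2 [|]]]] // _.
by exists (nth r0 [:: r0; r1; r2]); rewrite codomE enum_ord3.
Qed.

Lemma dH3_ge2 i j :
  (forall l l', i l = j l -> i l' = j l' -> l = l') -> (2 <= dH3 i j)%N.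
Proof.
move=> agree_uniq; rewrite /dH3.
have agree_le1 : (#|[set l | i l == j l]| <= 1)%N.
  by apply/card_le1_eqP => l l'; rewrite !inE => /eqP el /eqP el'; apply: agree_uniq.
have <- : ~: [set l | i l == j l] = [set l | i l != j l].
  by apply/setP => l; rewrite !inE.
by have := cardsC [set l | i l == j l]; rewrite card_ord; lia.
Qed.

End IncreasingTriples.

Section LinearPolynomials.
Variable F : fieldType.
Implicit Types (f g p : {poly F}) (a b x y : F).

Lemma horner_size2 p x : (size p <= 2)%N -> p.[x] = p`_0 + p`_1 * x.
Proof.
move=> size_p; rewrite (horner_coef_wide _ size_p) !big_ord_recr big_ord0 /=.
by rewrite add0r expr0 expr1 mulr1.
Qed.

Lemma size2_poly_eq f g :
  (size f <= 2)%N -> (size g <= 2)%N -> f`_0 = g`_0 -> f`_1 = g`_1 -> f = g.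
Proof.
move=> size_f size_g e0 e1; apply/polyP => -[|[|k]] //.
by rewrite !nth_default // (leq_trans _ (isT : 2 <= k.+2)%N).
Qed.

Lemma size_scaleX_addC a b : (size (a *: 'X + b%:P)%R <= 2)%N.
Proof.
rewrite (leq_trans (size_polyD _ _)) // geq_max (leq_trans (size_polyC_leq1 _)) //.
by rewrite (leq_trans (size_scale_leq _ _)) ?size_polyX.
Qed.

Lemma horner_scaleX_addC a b x : (a *: 'X + b%:P).[x] = a * x + b.
Proof. by rewrite hornerD hornerZ hornerX hornerC. Qed.

Lemma affine_fixed_points a b x x' :
  x != x' -> a * x + b = x -> a * x' + b = x' -> (a, b) = (1, 0).
Proof.
move=> neq_x fix_x fix_x'.
have /eqP : (a - 1) * (x - x') = 0.
  by rewrite -[RHS](subrr (x - x')) -{2}fix_x -{2}fix_x'; ring.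
rewrite mulf_eq0 !subr_eq0 (negbTE neq_x) orbF => /eqP a1.
by move: fix_x; rewrite a1 mul1r => /(canRL (addKr x)); rewrite addrC subrr => ->.
Qed.

(* The leading coefficient of g cannot vanish: f would then be constant on x1, x2,
   hence equal to g. *)
Lemma lin_poly_eval_affine f g x1 x2 y1 y2 :
  (size f <= 2)%N -> (size g <= 2)%N -> f != g -> x1 != x2 -> y1 != y2 ->
  f.[x1] = g.[y1] -> f.[x2] = g.[y2] ->
  exists a b, [/\ a != 0, (a, b) != (1, 0) &
                  forall x y, f.[x] = g.[y] -> a * x + b = y].
Proof.
move=> size_f size_g neq_fg neq_x neq_y; rewrite !horner_size2 // => e1 e2.
have g1_neq0 : g`_1 != 0.
  apply: contra neq_fg => /eqP g10; rewrite g10 !mul0r !addr0 in e1 e2.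
  have /eqP : f`_1 * (x1 - x2) = 0.
    by rewrite -[RHS](subrr g`_0) -{1}e1 -e2; ring.
  rewrite mulf_eq0 subr_eq0 (negbTE neq_x) orbF => /eqP f10.
  apply/eqP/size2_poly_eq => //; last by rewrite f10 g10.
  by rewrite -e1 f10 mul0r addr0.
have solve_y x y : f`_0 + f`_1 * x = g`_0 + g`_1 * y ->
    f`_1 / g`_1 * x + (f`_0 - g`_0) / g`_1 = y.
  move=> e; have -> : y = (g`_0 + g`_1 * y - g`_0) / g`_1 by field.
  by rewrite -e; field.
exists (f`_1 / g`_1), ((f`_0 - g`_0) / g`_1); split.
- rewrite mulf_neq0 ?invr_eq0 //; apply: contra neq_y => /eqP f10.
  by rewrite -(solve_y _ _ e1) -(solve_y _ _ e2) f10 !mul0r.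
- apply: contra neq_fg; rewrite xpair_eqE => /andP[/eqP a1 /eqP b0].
  apply/eqP/size2_poly_eq => //.
    by move/eqP: b0; rewrite mulf_eq0 invr_eq0 (negbTE g1_neq0) orbF subr_eq0 => /eqP.
  by apply: (mulIf (invr_neq0 g1_neq0)); rewrite a1 mulfV.
- by move=> x y; rewrite !horner_size2 //; apply: solve_y.
Qed.

End LinearPolynomials.

Section ReedSolomonWords.
Variables (F : fieldType) (n : nat) (alpha : 'I_n -> F).
Hypothesis alpha_inj : injective alpha.
Implicit Types (f g p : {poly F}) (i j : 'I_3 -> 'I_n).

Definition rs_word p : seq F := [seq p.[alpha k] | k <- enum 'I_n].

Lemma size_rs_word p : size (rs_word p) = n.
Proof. by rewrite size_map size_enum_ord. Qed.

Lemma rs_word_neq f g k : f.[alpha k] != g.[alpha k] -> rs_word f != rs_word g.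
Proof. by apply: contra => /eqP/eq_in_map/(_ k (mem_enum _ k))->. Qed.

Lemma rs_word_subseq p (r : seq 'I_n) :
  sorted <%O r -> subseq [seq p.[alpha k] | k <- r] (rs_word p).
Proof. by rewrite -subseq_enum_ord; apply: map_subseq. Qed.

Lemma rs_word_subseq3 p s : subseq s (rs_word p) -> size s = 3%N ->
  exists2 i, incr3 i & s = [seq p.[alpha k] | k <- codom i].
Proof.
case/subseq_map_preimage => r; rewrite subseq_enum_ord => lt_r ->.
by rewrite size_map => /codom_seq3[i ri]; exists i; rewrite ?incr3E ri.
Qed.

Definition affine_triple_free :=
  forall i j, incr3 i -> incr3 j -> (2 <= dH3 i j)%N ->
    ~ (exists a b, a != 0 /\ forall l, a * alpha (i l) + b = alpha (j l)).

Lemma lcs_rs_word_le2 f g :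
  (size f <= 2)%N -> (size g <= 2)%N -> rs_word f != rs_word g ->
  affine_triple_free -> (lcs_len (rs_word f) (rs_word g) <= 2)%N.
Proof.
move=> size_f size_g neq_fg free; apply: lcs_len_le => s sub_f sub_g.
rewrite leqNgt; apply/negP => s_gt2.
have size_s3 : size (take 3 s) = 3%N by rewrite size_takel.
have [i inc_i e_i] := rs_word_subseq3 (subseq_trans (take_subseq s 3) sub_f) size_s3.
have [j inc_j e_j] := rs_word_subseq3 (subseq_trans (take_subseq s 3) sub_g) size_s3.
have eval_fg l : f.[alpha (i l)] = g.[alpha (j l)].
  move: e_j; rewrite e_i !codomE -!map_comp => /eq_in_map; apply.
  by rewrite -enumT mem_enum.
have alpha_neq (h : 'I_3 -> 'I_n) l l' : incr3 h -> l != l' -> alpha (h l) != alpha (h l').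
  by move=> inc_h; rewrite (inj_eq alpha_inj) (inj_eq (incr3_inj inc_h)).
have neq_fg' : f != g by apply: contra neq_fg => /eqP ->.
have [a [b [a_neq0 ab_neq aff]]] := lin_poly_eval_affine size_f size_g neq_fg'
  (alpha_neq i ord0 ord_max inc_i isT) (alpha_neq j ord0 ord_max inc_j isT)
  (eval_fg ord0) (eval_fg ord_max).
apply: (free i j inc_i inc_j); last by exists a, b; split => // l; apply/aff/eval_fg.
apply: dH3_ge2 => l l' e_l e_l'; apply/eqP; apply: contraR ab_neq => neq_l.
apply/eqP/(affine_fixed_points (alpha_neq i l l' inc_i neq_l)).
  by rewrite {2}e_l; apply/aff/eval_fg.
by rewrite {2}e_l'; apply/aff/eval_fg.
Qed.

Lemma affine_triple_lcs i j a b :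
  incr3 i -> incr3 j -> (forall l, a * alpha (i l) + b = alpha (j l)) ->
  (3 <= lcs_len (rs_word (a *: 'X + b%:P)) (rs_word 'X))%N.
Proof.
rewrite !incr3E => inc_i inc_j aff.
have -> : 3%N = size [seq alpha k | k <- codom j] by rewrite size_map size_codom card_ord.
apply: lcs_len_ge.
  have -> : [seq alpha k | k <- codom j] = [seq (a *: 'X + b%:P).[alpha k] | k <- codom i].
    by rewrite !codomE -!map_comp; apply: eq_map => l /=; rewrite horner_scaleX_addC aff.
  exact: rs_word_subseq.
have -> : [seq alpha k | k <- codom j] = [seq 'X.[alpha k] | k <- codom j].
  by apply: eq_map => k; rewrite hornerX.
exact: rs_word_subseq.
Qed.

Lemma rs_pair_lcs_ge2 : (3 <= n)%N -> exists f,
  [/\ (size f <= 2)%N, rs_word f != rs_word 'X & (2 <= lcs_len (rs_word f) (rs_word 'X))%N].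
Proof.
move=> n_ge3.
pose k0 := Ordinal (leq_trans (isT : 1 <= 3)%N n_ge3).
pose k1 := Ordinal (leq_trans (isT : 2 <= 3)%N n_ge3).
pose k2 := Ordinal n_ge3.
have d_neq0 : alpha k1 - alpha k0 != 0 by rewrite subr_eq0 (inj_eq alpha_inj).
pose a := (alpha k2 - alpha k1) / (alpha k1 - alpha k0).
pose f := a *: 'X + (alpha k1 - a * alpha k0)%:P.
have f_k0 : f.[alpha k0] = alpha k1 by rewrite horner_scaleX_addC; ring.
have f_k1 : f.[alpha k1] = alpha k2 by rewrite horner_scaleX_addC /a; field.
exists f; split; first exact: size_scaleX_addC.
  by apply: (rs_word_neq (k := k0)); rewrite f_k0 hornerX (inj_eq alpha_inj).
have -> : 2%N = size [seq f.[alpha k] | k <- [:: k0; k1]] by [].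
apply: lcs_len_ge; first exact: rs_word_subseq.
have -> : [seq f.[alpha k] | k <- [:: k0; k1]] = [seq 'X.[alpha k] | k <- [:: k1; k2]].
  by rewrite /= f_k0 f_k1 !hornerX.
exact: rs_word_subseq.
Qed.

Lemma insdel_dist_RS2_ge : affine_triple_free -> forall u v,
  RS alpha 2 u -> RS alpha 2 v -> u <> v -> (2 * n - 4 <= insdel_dist u v)%N.
Proof.
move=> free _ _ [p [size_p ->]] [q [size_q ->]].
rewrite -/(rs_word p) -/(rs_word q) => /eqP neq_pq.
have := lcs_rs_word_le2 size_p size_q neq_pq free.
by rewrite /insdel_dist !size_rs_word; lia.
Qed.

Lemma insdel_dist_RS2_attained : (3 <= n)%N -> affine_triple_free ->
  exists u v, [/\ RS alpha 2 u, RS alpha 2 v, u <> v & insdel_dist u v = (2 * n - 4)%N].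
Proof.
move=> n_ge3 free; have [f [size_f neq_fX lcs_ge2]] := rs_pair_lcs_ge2 n_ge3.
have size_X : (size ('X : {poly F}) <= 2)%N by rewrite size_polyX.
exists (rs_word f), (rs_word 'X); split; [by exists f | by exists 'X | exact/eqP |].
have := lcs_rs_word_le2 size_f size_X neq_fX free.
by move: lcs_ge2; rewrite /insdel_dist !size_rs_word; lia.
Qed.

Lemma insdel_dist_RS2_lt i j a b : (3 <= n)%N ->
  incr3 i -> incr3 j -> (0 < dH3 i j)%N -> (forall l, a * alpha (i l) + b = alpha (j l)) ->
  exists u v, [/\ RS alpha 2 u, RS alpha 2 v, u <> v & (insdel_dist u v < 2 * n - 4)%N].
Proof.
move=> n_ge3 inc_i inc_j /card_gt0P[l]; rewrite inE => neq_l aff.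
pose f := a *: 'X + b%:P.
have neq_fX : rs_word f != rs_word 'X.
  apply: (rs_word_neq (k := i l)).
  by rewrite horner_scaleX_addC aff hornerX (inj_eq alpha_inj) eq_sym.
exists (rs_word f), (rs_word 'X); split; [| by exists 'X; rewrite size_polyX | exact/eqP |].
  by exists f; rewrite size_scaleX_addC.
have := affine_triple_lcs inc_i inc_j aff.
by rewrite -/f /insdel_dist !size_rs_word; lia.
Qed.

End ReedSolomonWords.

Theorem lemma4p6 (F : finFieldType) (n : nat) (alpha : 'I_n -> F) :
  (3 <= n)%N -> (n <= #|F|)%N -> injective alpha ->
  (code_insdel_dist (RS alpha 2) (2 * n - 4)%N <->
   (forall i j : 'I_3 -> 'I_n, incr3 i -> incr3 j -> (2 <= dH3 i j)%N ->
      ~ (exists a b : F, a != 0 /\ forall l : 'I_3, a * alpha (i l) + b = alpha (j l)))).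
Proof.
(* n <= #|F| is a consequence of the injectivity of alpha. *)
move=> n_ge3 _ alpha_inj.
split => [[_ dist_min] i j inc_i inc_j dH_ij [a [b [_ aff]]] | free].
  have [|u [v [RS_u RS_v neq_uv]]] := insdel_dist_RS2_lt alpha_inj n_ge3 inc_i inc_j _ aff.
    exact: leq_trans dH_ij.
  by rewrite ltnNge dist_min.
split; first exact: insdel_dist_RS2_attained.
exact: insdel_dist_RS2_ge.
Qed.
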